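(* Let $q\ge1$ and let $\mathcal{T}_q=(\tau_1,\ldots,\tau_q)$ be the permutation ideal in $S_{\mathcal{T}}=K[x_\sigma:\sigma\in S_q]$. Consider the simplicial complex $\mathbb{M}_q^2$ with vertex set $\{\tau_i\tau_j:1\le i\le j\le q\}$, $\mathcal{M}=\{\tau_i\tau_j:1\le i<j\le q\}$, facets $\mathcal{M}_k=\mathcal{M}\cup\{\tau_k^2\}$ ($k\in[q]$), and for a set $A$ of vertices let $m_A$ be the lcm of its elements. Then: (i) $m_{\mathcal{M}}=\prod_{\sigma\in S_q}x_\sigma^{2q-1}$; (ii) for a face $\gamma\in\mathbb{M}_q^2$ and $\sigma\in S_q$: $x_\sigma^{2q}\mid m_\gamma$ if and only if $\tau_i^2\in\gamma$ for some $i\in[q]$ with $\sigma(i)=q$; (iii) for a face $\gamma\in\mathbb{M}_q^2$ and $\sigma\in S_q$ with $\sigma(i)=q$ and $\sigma(j)=q-1$: if $\tau_i^2\notin\gamma$, then $x_\sigma^{2q-1}\mid m_\gamma$ if and only if $\tau_i\tau_j\in\gamma$; (iv) for every $k\in[q]$, $m_{\mathcal{M}_k}=\prod_{\sigma\in S_q,\ \sigma(k)=q}x_\sigma^{2q}\prod_{\sigma\in S_q,\ \sigma(k)\neq q}x_\sigma^{2q-1}$; (v) $m_{V(\mathbb{M}_q^2)}=\prod_{\sigma\in S_q}x_\sigma^{2q}$, where $V(\mathbb{M}_q^2)$ is the vertex set.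
   Context: $S_q$ is the symmetric group on $[q]$; for $\sigma=i_1\cdots i_q$ in one-line notation, $\sigma(j)=i_j$. $K$ is a field, $\tau_i=\prod_{\sigma\in S_q}x_\sigma^{\sigma(i)}$, and $\mathcal{T}_q=(\tau_1,\ldots,\tau_q)$. The monomials $\tau_i\tau_j$ ($1\le i\le j\le q$) are pairwise distinct, so they can serve as vertex names. *)

(* Monomials in the variables x_sigma (sigma in S_q) are
   represented by their exponent vectors {ffun 'S_q -> nat}. *)
From mathcomp Require Import all_boot all_fingroup.
Set Implicit Arguments. Unset Strict Implicit. Unset Printing Implicit Defensive.

Section Monomials.
Variable q : nat.

Definition mon := {ffun 'S_q -> nat}.
Definition mone : mon := [ffun _ => 0].
Definition mmul (a b : mon) : mon := [ffun s => a s + b s].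
Definition mvarpow (s : 'S_q) (e : nat) : mon :=
  [ffun t => if t == s then e else 0].
Definition mlcm (a b : mon) : mon := [ffun s => maxn (a s) (b s)].
Definition mdvd (a b : mon) : bool := [forall s, a s <= b s].

(* [q] = {1,...,q} is encoded by 'I_q = {0,...,q-1}; val1b s i is the
   1-based value sigma(i) of the permutation. *)
Definition val1b (s : 'S_q) (i : 'I_q) : nat := (s i).+1.

Definition tau (i : 'I_q) : mon := \big[mmul/mone]_(s : 'S_q) mvarpow s (val1b s i).

(* vertices tau_i tau_j (i <= j) are named by the pair (i, j) with i <= j *)
Definition vmon (p : 'I_q * 'I_q) : mon := mmul (tau p.1) (tau p.2).
Definition vtx (i j : 'I_q) : 'I_q * 'I_q := if i <= j then (i, j) else (j, i).

Definition Vset : {set 'I_q * 'I_q} := [set p : 'I_q * 'I_q | p.1 <= p.2].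
Definition Mset : {set 'I_q * 'I_q} := [set p : 'I_q * 'I_q | p.1 < p.2].
Definition Mk (k : 'I_q) : {set 'I_q * 'I_q} := Mset :|: [set (k, k)].
Definition face (g : {set 'I_q * 'I_q}) : Prop := exists k, g \subset Mk k.

Definition lcmA (A : {set 'I_q * 'I_q}) : mon := \big[mlcm/mone]_(p in A) vmon p.

End Monomials.

(* The exponent of x_sigma in tau_i tau_j is sigma(i) + sigma(j), so the
   exponent of x_sigma in m_A is the largest such sum over the vertices of A.
   Injectivity of sigma makes 2q the largest possible sum, attained only on the
   diagonal vertex tau_i^2 with sigma(i) = q; off the diagonal the largest sum
   is 2q - 1, attained only at the pair {sigma^-1(q), sigma^-1(q-1)}. *)

From mathcomp Require Import all_boot all_fingroup zify.
Set Implicit Arguments. Unset Strict Implicit. Unset Printing Implicit Defensive.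

Section MonomialCoordinates.
Variable q : nat.
Implicit Types (s t : 'S_q) (A : {set 'I_q * 'I_q}).

Lemma mmul_bigE (P : pred 'S_q) (F : 'S_q -> mon q) s :
  (\big[@mmul q/mone q]_(t | P t) F t) s = \sum_(t | P t) F t s.
Proof. by apply: (big_morph (fun m : mon q => m s)) => [a b|]; rewrite ffunE. Qed.

Lemma big_mvarpowE (P : pred 'S_q) (e : 'S_q -> nat) s :
  (\big[@mmul q/mone q]_(t | P t) mvarpow t (e t)) s = if P s then e s else 0.
Proof.
rewrite mmul_bigE big_mkcond (bigD1 s) //= ffunE eqxx big1 ?addn0 // => t ts.
by rewrite ffunE eq_sym (negbTE ts); case: (P t).
Qed.

Lemma tauE (i : 'I_q) s : tau i s = (s i).+1.
Proof. by rewrite /tau (big_mvarpowE xpredT). Qed.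

Lemma vmonE (p : 'I_q * 'I_q) s : vmon p s = (s p.1).+1 + (s p.2).+1.
Proof. by rewrite ffunE !tauE. Qed.

Lemma lcmAE A s : lcmA A s = \max_(p in A) vmon p s.
Proof. by apply: (big_morph (fun m : mon q => m s)) => [a b|]; rewrite ffunE. Qed.

Lemma mdvd_mvarpowE s e (m : mon q) : mdvd (mvarpow s e) m = (e <= m s).
Proof.
apply/forallP/idP => [/(_ s)|le_e t]; first by rewrite ffunE eqxx.
by rewrite ffunE; case: eqP => [->|].
Qed.

Lemma lcmA_eq_at A s e : {in A, forall p, vmon p s <= e} ->
  (exists2 p, p \in A & e <= vmon p s) -> lcmA A s = e.
Proof.
move=> le_e [p pA ge_e]; rewrite lcmAE; apply/eqP; rewrite eqn_leq.
by apply/andP; split; [apply/bigmax_leqP | exact: (bigmax_sup p)].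
Qed.

Lemma mdvd_mvarpow_lcmA A s e : 0 < e ->
  mdvd (mvarpow s e) (lcmA A) = [exists p in A, e <= vmon p s].
Proof.
move=> e_gt0; rewrite mdvd_mvarpowE lcmAE.
apply/idP/exists_inP => [le_e_max|[p pA le_e]]; last exact: (bigmax_sup p).
apply/exists_inP; apply: contraLR le_e_max => /exists_inPn lt_e.
rewrite -ltnNge -(prednK e_gt0) ltnS; apply/bigmax_leqP => p pA.
by rewrite -ltnS prednK // ltnNge lt_e.
Qed.

End MonomialCoordinates.

Section VertexExponents.
Variables (q : nat) (s : 'S_q).
Implicit Types (i j k : 'I_q) (p : 'I_q * 'I_q).

Lemma perm_val_eq i j : ((s i : nat) == s j) = (i == j).
Proof. by rewrite (inj_eq val_inj) (inj_eq perm_inj). Qed.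

Lemma perm_val_onto n : n < q -> exists i, (s i : nat) = n.
Proof. by move=> lt_nq; exists ((s^-1)%g (Ordinal lt_nq)); rewrite permKV. Qed.

Lemma exists_perm_top : 0 < q -> exists i, (s i).+1 = q.
Proof.
move=> q_gt0; have [i si] : exists i, (s i : nat) = q.-1 by apply: perm_val_onto; lia.
by exists i; lia.
Qed.

Lemma vmon_le p : vmon p s <= 2 * q.
Proof. by rewrite vmonE; have := ltn_ord (s p.1); have := ltn_ord (s p.2); lia. Qed.

Lemma vmon_Mset_le p : p \in Mset q -> vmon p s <= 2 * q - 1.
Proof.
rewrite inE => lt_p; have /eqP : (s p.1 : nat) != s p.2.
  by rewrite perm_val_eq -val_eqE neq_ltn lt_p.
by rewrite vmonE; have := ltn_ord (s p.1); have := ltn_ord (s p.2); lia.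
Qed.

Lemma vmon_ge_2q p : (2 * q <= vmon p s) = (p.1 == p.2) && ((s p.1).+1 == q).
Proof.
rewrite -perm_val_eq vmonE.
by have := ltn_ord (s p.1); have := ltn_ord (s p.2); lia.
Qed.

Lemma vmon_diag_ge k : (2 * q - 1 <= vmon (k, k) s) = ((s k).+1 == q).
Proof. by rewrite vmonE /=; have := ltn_ord (s k); lia. Qed.

Lemma vmon_vtx i j : vmon (vtx i j) s = (s i).+1 + (s j).+1.
Proof. by rewrite /vtx; case: leqP; rewrite vmonE //= addnC. Qed.

Lemma vtx_Mset i j : i != j -> vtx i j \in Mset q.
Proof. by rewrite /vtx -val_eqE; case: ltngtP => // lt_ij _; rewrite inE. Qed.

Lemma vmon_Mset_ge i j p : (s i).+1 = q -> (s j).+1 = q - 1 -> p \in Mset q ->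
  (2 * q - 1 <= vmon p s) = (p == vtx i j).
Proof.
case: p => a b si sj; rewrite inE /= => lt_ab.
apply/idP/eqP => [|->]; last by rewrite vmon_vtx; lia.
have /eqP: (s a : nat) != s b by rewrite perm_val_eq -val_eqE /= neq_ltn lt_ab.
rewrite vmonE /= => ne_ab le_sum.
have : ((s a : nat) == s i) && ((s b : nat) == s j) \/
       ((s a : nat) == s j) && ((s b : nat) == s i).
  by have := ltn_ord (s a); have := ltn_ord (s b); lia.
rewrite !perm_val_eq => -[] /andP[/eqP ai /eqP bj]; subst a b.
  by rewrite /vtx ltnW.
by rewrite /vtx leqNgt lt_ab.
Qed.

Lemma Mset_top_vertex : 1 < q -> exists2 p, p \in Mset q & vmon p s = 2 * q - 1.
Proof.
move=> q_gt1; have [i si] : exists i, (s i : nat) = q.-1 by apply: perm_val_onto; lia.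
have [j sj] : exists j, (s j : nat) = q.-2 by apply: perm_val_onto; lia.
have ne_ij : i != j by rewrite -perm_val_eq si sj; lia.
by exists (vtx i j); [exact: vtx_Mset | rewrite vmon_vtx si sj; lia].
Qed.

End VertexExponents.

Section LcmOfFaces.
Variable q : nat.

Lemma lcmA_Mset : 1 < q ->
  lcmA (Mset q) = \big[@mmul q/mone q]_(s : 'S_q) mvarpow s (2 * q - 1).
Proof.
move=> q_gt1; apply/ffunP => s; rewrite (big_mvarpowE xpredT).
apply: lcmA_eq_at => [p|]; first exact: vmon_Mset_le.
by have [p pM vp] := Mset_top_vertex s q_gt1; exists p; rewrite ?vp.
Qed.

Lemma mdvd_lcmA_2q (g : {set 'I_q * 'I_q}) s : 0 < q ->
  mdvd (mvarpow s (2 * q)) (lcmA g) <-> exists i : 'I_q, val1b s i = q /\ (i, i) \in g.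
Proof.
move=> q_gt0; rewrite mdvd_mvarpow_lcmA ?muln_gt0 //.
split=> [/exists_inP[[a b] abg]|[i [si ig]]].
  by rewrite vmon_ge_2q /= => /andP[/eqP eq_ab /eqP sa]; subst b; exists a.
by apply/exists_inP; exists (i, i); rewrite // vmon_ge_2q /= eqxx; apply/eqP.
Qed.

Lemma mdvd_lcmA_2q1 (g : {set 'I_q * 'I_q}) s (i j : 'I_q) : face g ->
  val1b s i = q -> val1b s j = q - 1 -> (i, i) \notin g ->
  mdvd (mvarpow s (2 * q - 1)) (lcmA g) <-> vtx i j \in g.
Proof.
rewrite /val1b => -[k sub_g_Mk] si sj iig.
rewrite mdvd_mvarpow_lcmA; last lia.
split=> [/exists_inP[p pg]|ijg]; last first.
  by apply/exists_inP; exists (vtx i j); rewrite // vmon_vtx; lia.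
have := subsetP sub_g_Mk p pg; rewrite in_setU => /orP[pM|/set1P eq_p].
  by rewrite (vmon_Mset_ge si sj pM) => /eqP<-.
subst p; rewrite vmon_diag_ge => /eqP sk.
have /eqP eq_ki : (s k : nat) == s i by lia.
by move: pg; rewrite (perm_inj (val_inj eq_ki)) (negbTE iig).
Qed.

Lemma lcmA_Mk (k : 'I_q) :
  lcmA (Mk k) =
  mmul (\big[@mmul q/mone q]_(s : 'S_q | val1b s k == q) mvarpow s (2 * q))
       (\big[@mmul q/mone q]_(s : 'S_q | val1b s k != q) mvarpow s (2 * q - 1)).
Proof.
apply/ffunP => s; rewrite ffunE !big_mvarpowE /val1b.
have kMk : (k, k) \in Mk k by rewrite in_setU set11 orbT.
have := ltn_ord (s k); case: eqP => [sk|nsk] lt_sk; rewrite ?addn0 ?add0n.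
all: apply: lcmA_eq_at.
- by move=> p _; exact: vmon_le.
- by exists (k, k); rewrite // vmonE /= sk; lia.
- move=> p; rewrite in_setU => /orP[/vmon_Mset_le //|/set1P ->].
  by rewrite vmonE /=; lia.
- have [|p pM vp] := @Mset_top_vertex q s; first lia.
  by exists p; rewrite ?in_setU ?pM ?vp.
Qed.

Lemma lcmA_Vset : 0 < q ->
  lcmA (Vset q) = \big[@mmul q/mone q]_(s : 'S_q) mvarpow s (2 * q).
Proof.
move=> q_gt0; apply/ffunP => s; rewrite (big_mvarpowE xpredT).
apply: lcmA_eq_at => [p _|]; first exact: vmon_le.
have [i si] := exists_perm_top s q_gt0.
by exists (i, i); rewrite ?inE // vmonE /= si; lia.
Qed.

End LcmOfFaces.

Theorem lemma4p6 (q : nat) (hq : 0 < q) :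
  [/\ (* (i) (needs q >= 2: for q = 1, M is empty and m_M = 1) *)
      (1 < q -> lcmA (Mset q) = \big[@mmul q/mone q]_(s : 'S_q) mvarpow s (2 * q - 1)),
      (* (ii) *)
      (forall (g : {set 'I_q * 'I_q}), face g -> forall s : 'S_q,
         mdvd (mvarpow s (2 * q)) (lcmA g) <->
         exists i : 'I_q, val1b s i = q /\ (i, i) \in g),
      (* (iii) *)
      (forall (g : {set 'I_q * 'I_q}), face g -> forall (s : 'S_q) (i j : 'I_q),
         val1b s i = q -> val1b s j = q - 1 -> (i, i) \notin g ->
         (mdvd (mvarpow s (2 * q - 1)) (lcmA g) <-> vtx i j \in g)),
      (* (iv) *)
      (forall k : 'I_q,
         lcmA (Mk k) =
         mmul (\big[@mmul q/mone q]_(s : 'S_q | val1b s k == q) mvarpow s (2 * q))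
              (\big[@mmul q/mone q]_(s : 'S_q | val1b s k != q) mvarpow s (2 * q - 1)))
    & (* (v) *)
      lcmA (Vset q) = \big[@mmul q/mone q]_(s : 'S_q) mvarpow s (2 * q)].
Proof.
split.
- exact: lcmA_Mset.
- by move=> g _ s; exact: mdvd_lcmA_2q.
- by move=> g gF s i j; exact: mdvd_lcmA_2q1.
- exact: lcmA_Mk.
- exact: lcmA_Vset.
Qed.
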